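(* Let $d\ge 3$ be odd. The abelianization $G_d/G_d'$ is isomorphic to $\mathbb Z^d$; more precisely, the elements $a_1^{i_1}a_2^{i_2}\cdots a_d^{i_d}$, $(i_1,\dots,i_d)\in\mathbb Z^d$, form a complete set of pairwise distinct coset representatives of $G_d'$ in $G_d$.
   Context: Let $d\ge 3$, $X=\{1,\dots,d\}$, $T$ the $d$-regular rooted tree with vertex set $X^*$. $\mathrm{Aut}(T)$ is the group of root-preserving automorphisms with product left-to-right: $(gh)(u)=h(g(u))$. Sections $g|_u$ are defined by $g(uv)=g(u)\,g|_u(v)$; we write $g=(g|_1,\dots,g|_d)\lambda_g$ with $\lambda_g\in S_d$ the action on the first level; $e$ is the identity; $\overline{j}\in\{1,\dots,d\}$ denotes $j$ mod $d$. $G_d=\langle a_1,\dots,a_d\rangle\le\mathrm{Aut}(T)$ where $a_i$ acts on the first level as $(i\ \overline{i+1})$, with $a_i|_i=a_i$, $a_i|_{\overline{i+1}}=a_{\overline{i+1}}$, and $a_i|_x=e$ otherwise. $G_d'$ denotes the commutator subgroup. *)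

From HB Require Import structures.
From mathcomp Require Import all_boot all_order all_algebra.
Set Implicit Arguments. Unset Strict Implicit. Unset Printing Implicit Defensive.

(* Letters of the alphabet X = {1,...,d} are represented by 'I_d = {0,...,d-1}
   (letter k+1 <-> ordinal k).  Vertices of T are words w : seq 'I_d.
   ordS i is i+1 mod d (cyclically), i.e. \overline{i+1}. *)

Fixpoint a_act (d : nat) (i : 'I_d) (w : seq 'I_d) {struct w} : seq 'I_d :=
  match w with
  | [::] => [::]
  | x :: w' =>
      if x == i then ordS i :: a_act i w'
      else if x == ordS i then i :: a_act (ordS i) w'
      else x :: w'
  end.

Fixpoint ainv_act (d : nat) (i : 'I_d) (w : seq 'I_d) {struct w} : seq 'I_d :=
  match w with
  | [::] => [::]
  | x :: w' =>
      if x == ordS i then i :: ainv_act i w'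
      else if x == i then ordS i :: ainv_act (ordS i) w'
      else x :: w'
  end.

(* a letter of a group word: (i, false) = a_i, (i, true) = a_i^{-1} *)
Definition gen (d : nat) := ('I_d * bool)%type.

Definition gen_act (d : nat) (x : gen d) (w : seq 'I_d) : seq 'I_d :=
  if x.2 then ainv_act x.1 w else a_act x.1 w.

(* the tree automorphism represented by a group word; products are read
   left to right: (gh)(u) = h(g(u)) *)
Definition eval (d : nat) (s : seq (gen d)) (u : seq 'I_d) : seq 'I_d :=
  foldl (fun v x => gen_act x v) u s.

Definition winv (d : nat) (s : seq (gen d)) : seq (gen d) :=
  rev (map (fun x => (x.1, ~~ x.2)) s).

Definition wcomm (d : nat) (s t : seq (gen d)) : seq (gen d) :=
  winv s ++ winv t ++ s ++ t.

Definition in_comm (d : nat) (f : seq 'I_d -> seq 'I_d) : Prop :=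
  exists cs : seq (seq (gen d) * seq (gen d) * bool),
    eval (flatten [seq (if c.2 then winv (wcomm c.1.1 c.1.2) else wcomm c.1.1 c.1.2)
                  | c <- cs]) =1 f.

Definition wpow (d : nat) (i : 'I_d) (n : int) : seq (gen d) :=
  match n with
  | Posz k => nseq k (i, false)
  | Negz k => nseq k.+1 (i, true)
  end.

Definition rep (d : nat) (v : 'I_d -> int) : seq (gen d) :=
  flatten [seq wpow i (v i) | i <- enum 'I_d].

From mathcomp Require Import all_boot all_order all_algebra.
From mathcomp Require Import zify.
Set Implicit Arguments. Unset Strict Implicit. Unset Printing Implicit Defensive.

(* The exponent-sum vector of a word kills commutators and sends
   a_1^{i_1} ... a_d^{i_d} to (i_1, ..., i_d), and every word is congruent
   modulo G_d' to the representative with its own exponent sums.  What has to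
   be shown is that exponent sums are well defined on G_d, i.e. that every
   relator r has zero exponent sums.  The sections of r at the first level are
   relators of total length 2|r|, and the exponent sums e of r and e_p of its
   sections satisfy sum_p e_p(j+1) = e(j+1) + e(j); for odd d this forces e = 0
   once all e_p vanish.  So induction on the length settles every relator whose
   sections are all shorter.  A reduced relator with a section, and a
   second-level section, as long as itself has all its letters of one sign,
   and no nonempty word of constant sign is trivial. *)

Section Words.

Variables (d : nat) (d_gt1 : 1 < d).
Implicit Types (i j p q m : 'I_d) (x y : gen d) (r s t : seq (gen d)) (u w : seq 'I_d).

Lemma ordS_neq i : ordS i != i.
Proof.
apply/eqP => /(congr1 val) /=; have := ltn_ord i; rewrite leq_eqVlt.
case/orP=> [/eqP iS|iS]; first by rewrite iS modnn; lia.
by rewrite modn_small //; lia.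
Qed.

Lemma ordS_eqF i : (ordS i == i) = false.
Proof. exact/negbTE/ordS_neq. Qed.

Lemma eq_ordSF i : (i == ordS i) = false.
Proof. by rewrite eq_sym ordS_eqF. Qed.

(** * Sections of words *)

Definition transp i p : 'I_d := if p == i then ordS i else if p == ordS i then i else p.
Definition active i p : bool := (p == i) || (p == ordS i).
Definition gen_inv x : gen d := (x.1, ~~ x.2).

(* a_i|_i = a_i and a_i|_(i+1) = a_(i+1); the section of a_i^-1 at p is the
   inverse of the section of a_i at transp i p. *)
Definition gen_section x p : gen d := (if x.2 then transp x.1 p else p, x.2).

Fixpoint word_perm s p : 'I_d := if s is x :: s' then word_perm s' (transp x.1 p) else p.

(* Letters with a trivial section at the current vertex are dropped. *)
Fixpoint word_section s p : seq (gen d) :=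
  if s is x :: s' then
    if active x.1 p then gen_section x p :: word_section s' (transp x.1 p)
    else word_section s' (transp x.1 p)
  else [::].

Definition relator s := eval s =1 id.

Lemma transp_self i : transp i i = ordS i.
Proof. by rewrite /transp eqxx. Qed.

Lemma transp_ordS i : transp i (ordS i) = i.
Proof. by rewrite /transp ordS_eqF eqxx. Qed.

Lemma transp_id i p : ~~ active i p -> transp i p = p.
Proof. by rewrite /active /transp negb_or => /andP[/negbTE -> /negbTE ->]. Qed.

Lemma transpK i : involutive (transp i).
Proof.
move=> p; case: (boolP (active i p)) => [|/transp_id pE]; last by rewrite !pE.
by case/orP=> /eqP ->; rewrite ?(transp_self, transp_ordS).
Qed.

Lemma active_transp i p : active i (transp i p) = active i p.
Proof.
case: (boolP (active i p)) => [|/[dup] /transp_id -> /negbTE //].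
by case/orP=> /eqP ->; rewrite ?(transp_self, transp_ordS) /active eqxx ?orbT.
Qed.

Lemma gen_act_cons x p u : gen_act x (p :: u) =
  transp x.1 p :: (if active x.1 p then gen_act (gen_section x p) u else u).
Proof.
case: x => i e; rewrite /gen_act /gen_section /active /transp /=.
case: (p =P i) => [->|_]; first by case: e; rewrite /= ?eqxx ?eq_ordSF /= ?eqxx.
by case: (p =P ordS i) => [->|_]; case: e; rewrite /= ?eqxx ?eq_ordSF /= ?ordS_eqF ?eqxx.
Qed.

Lemma eval_cons s p u : eval s (p :: u) = word_perm s p :: eval (word_section s p) u.
Proof.
elim: s p u => [|x s IH] p u //=.
by rewrite /eval /= -/(eval _ _) gen_act_cons IH; case: (active x.1 p).
Qed.

Lemma relator_word_perm s p : relator s -> word_perm s p = p.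
Proof. by move=> /(_ [:: p]); rewrite eval_cons => -[]. Qed.

Lemma relator_section s p : relator s -> relator (word_section s p).
Proof. by move=> rel u; have := rel (p :: u); rewrite eval_cons => -[]. Qed.

Lemma eval_cat s t u : eval (s ++ t) u = eval t (eval s u).
Proof. by rewrite /eval foldl_cat. Qed.

Lemma gen_actK x : cancel (gen_act x) (gen_act (gen_inv x)).
Proof.
move=> w; elim: w x => [|p u IH] x; first by case: x => i [].
rewrite !gen_act_cons /= transpK active_transp.
case: (active x.1 p) => //.
have -> : gen_section (gen_inv x) (transp x.1 p) = gen_inv (gen_section x p).
  by rewrite /gen_section /gen_inv /=; case: x.2; rewrite //= transpK.
by rewrite IH.
Qed.

Lemma eval_cancel x s : eval [:: x, gen_inv x & s] =1 eval s.
Proof. by move=> u; rewrite /eval /= gen_actK. Qed.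

Lemma winv_cat s t : winv (s ++ t) = winv t ++ winv s.
Proof. by rewrite /winv map_cat rev_cat. Qed.

Lemma winv_cons x s : winv (x :: s) = winv s ++ [:: gen_inv x].
Proof. by rewrite -cat1s winv_cat. Qed.

Lemma winvK : involutive (@winv d).
Proof.
move=> s; rewrite /winv map_rev revK -map_comp -[RHS]map_id.
by apply: eq_map => -[i e] /=; rewrite negbK.
Qed.

Lemma evalK s : cancel (eval s) (eval (winv s)).
Proof. by elim: s => [|x s IH] u //; rewrite winv_cons eval_cat /= IH gen_actK. Qed.

Lemma evalVK s : cancel (eval (winv s)) (eval s).
Proof. by rewrite -{2}(winvK s); apply: evalK. Qed.

Lemma size_word_section s p : size (word_section s p) <= size s.
Proof.
elim: s p => [|x s IH] p //=; case: (active _ _) => /=; last exact: leqW.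
by rewrite ltnS.
Qed.

Fixpoint all_active s p : bool :=
  if s is x :: s' then active x.1 p && all_active s' (transp x.1 p) else true.

Lemma size_word_section_eq s p : (size (word_section s p) == size s) = all_active s p.
Proof.
elim: s p => [|x s IH] p //=; case: (active x.1 p) => /=; first exact: IH.
by apply/negbTE; rewrite neq_ltn ltnS size_word_section.
Qed.

Lemma all_active_index s i p : all (fun y => y.1 == i) s -> active i p -> all_active s p.
Proof.
elim: s p => [|x s IH] p //= /andP[/eqP -> si] ip.
by rewrite ip IH // active_transp.
Qed.

Lemma big_active (R : Type) (idx : R) (op : Monoid.com_law idx) (F : 'I_d -> R) i :
  (forall p, ~~ active i p -> F p = idx) -> \big[op/idx]_p F p = op (F i) (F (ordS i)).
Proof.
move=> F0; rewrite (bigD1 i) // (bigD1 (ordS i)) /=; last by rewrite ordS_neq.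
rewrite big1 ?Monoid.mulm1 // => p /andP[ni nS].
by apply: F0; rewrite /active negb_or ni nS.
Qed.

Lemma big_transp (R : Type) (idx : R) (op : Monoid.com_law idx) i (F : 'I_d -> R) :
  \big[op/idx]_p F (transp i p) = \big[op/idx]_p F p.
Proof. by rewrite [RHS](reindex_inj (can_inj (transpK i))). Qed.

Lemma sum_size_word_section s : \sum_p size (word_section s p) = 2 * size s.
Proof.
elim: s => [|x s IH] /=; first by rewrite big1.
have -> : \sum_p size (word_section (x :: s) p) =
    \sum_p (active x.1 p : nat) + \sum_p size (word_section s (transp x.1 p)).
  by rewrite -big_split; apply: eq_bigr => p _ /=; case: (active x.1 p).
rewrite (big_transp _ x.1 (fun p => size (word_section s p))) IH.
rewrite (big_active _ (i := x.1)) => [|p /negbTE -> //].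
by rewrite /= /active !eqxx orbT /=; lia.
Qed.

(** * The commutator subgroup *)

Definition comm_factor (c : seq (gen d) * seq (gen d) * bool) :=
  if c.2 then winv (wcomm c.1.1 c.1.2) else wcomm c.1.1 c.1.2.

Lemma winv_wcomm s t : winv (wcomm s t) = wcomm t s.
Proof. by rewrite /wcomm !winv_cat !winvK !catA. Qed.

Lemma in_comm_eq (f g : seq 'I_d -> seq 'I_d) : in_comm f -> f =1 g -> in_comm g.
Proof. by case=> cs fE fg; exists cs => u; rewrite fE fg. Qed.

Lemma in_comm_id : in_comm (@id (seq 'I_d)).
Proof. by exists [::]. Qed.

Lemma in_comm_comp (f g : seq 'I_d -> seq 'I_d) : in_comm f -> in_comm g -> in_comm (g \o f).
Proof.
case=> cs1 fE [cs2 gE]; exists (cs1 ++ cs2) => u.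
by rewrite map_cat flatten_cat eval_cat /= fE gE.
Qed.

Lemma in_comm_wcomm s t : in_comm (eval (wcomm s t)).
Proof. by exists [:: (s, t, false)] => u; rewrite /= cats0. Qed.

Lemma in_comm_conj r s : in_comm (eval s) -> in_comm (eval (winv r ++ s ++ r)).
Proof.
case=> cs sE; apply: (@in_comm_eq (eval (winv r ++ flatten (map comm_factor cs) ++ r))).
  elim: cs {sE} => [|c cs IH] /=.
    by apply: in_comm_eq in_comm_id _ => w; rewrite eval_cat /= evalVK.
  have conjE a b : eval (winv r ++ wcomm a b ++ r) =1
      eval (wcomm (winv r ++ a ++ r) (winv r ++ b ++ r)).
    by move=> w; rewrite /wcomm !winv_cat !winvK !eval_cat /= !evalK.
  have cC : in_comm (eval (winv r ++ comm_factor c ++ r)).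
    rewrite /comm_factor; case: c.2; rewrite ?winv_wcomm;
      exact: in_comm_eq (in_comm_wcomm _ _) (fsym (conjE _ _)).
  by apply: in_comm_eq (in_comm_comp cC IH) _ => w; rewrite /= !eval_cat evalK.
by move=> w; rewrite !eval_cat /= sE.
Qed.

Definition comm_eq s t := in_comm (eval (winv t ++ s)).

Lemma comm_eq_eval s t : eval s =1 eval t -> comm_eq s t.
Proof.
move=> st; apply: in_comm_eq in_comm_id _ => u.
by rewrite eval_cat /= st evalVK.
Qed.

Lemma comm_eq_trans t s r : comm_eq s t -> comm_eq t r -> comm_eq s r.
Proof.
move=> st tr; apply: in_comm_eq (in_comm_comp tr st) _ => w.
by rewrite /= !eval_cat evalK.
Qed.

Lemma comm_eq_catl r s t : comm_eq s t -> comm_eq (r ++ s) (r ++ t).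
Proof. by move=> st; apply: in_comm_eq st _ => w; rewrite winv_cat !eval_cat /= evalVK. Qed.

Lemma comm_eq_catr r s t : comm_eq s t -> comm_eq (s ++ r) (t ++ r).
Proof. by move=> /(in_comm_conj r); rewrite /comm_eq winv_cat -!catA. Qed.

Lemma comm_eq_catC s t : comm_eq (s ++ t) (t ++ s).
Proof. by rewrite /comm_eq winv_cat -!catA; apply: in_comm_wcomm. Qed.

Lemma comm_eq_cancel x s : comm_eq [:: x, gen_inv x & s] s.
Proof. exact/comm_eq_eval/eval_cancel. Qed.

(** * Exponent sums *)

Definition gen_exp x : int := if x.2 then (-1)%R else 1%R.

Definition expsum s m : int := \sum_(x <- s | x.1 == m) gen_exp x.

Lemma expsum_nil m : expsum [::] m = 0%R.
Proof. exact: big_nil. Qed.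

Lemma expsum_cons x s m :
  expsum (x :: s) m = ((if x.1 == m then gen_exp x else 0) + expsum s m)%R.
Proof. by rewrite /expsum big_cons; case: (x.1 == m); rewrite ?GRing.add0r. Qed.

Lemma expsum_cat s t m : expsum (s ++ t) m = (expsum s m + expsum t m)%R.
Proof. exact: big_cat. Qed.

Lemma expsum_winv s m : expsum (winv s) m = (- expsum s m)%R.
Proof.
elim: s => [|x s IH]; first by rewrite expsum_nil GRing.oppr0.
rewrite winv_cons expsum_cat IH !expsum_cons expsum_nil /gen_exp /=.
by case: (x.1 == m); case: x.2 => /=; lia.
Qed.

Lemma expsum_cancel r x t m : expsum (r ++ [:: x, gen_inv x & t]) m = expsum (r ++ t) m.
Proof.
rewrite !expsum_cat !expsum_cons /gen_exp /=.
by case: (x.1 == m); case: x.2 => /=; lia.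
Qed.

Lemma expsum_comm_factors cs m : expsum (flatten (map comm_factor cs)) m = 0%R.
Proof.
elim: cs => [|c cs IH] /=; first exact: expsum_nil.
rewrite expsum_cat IH /comm_factor.
by case: c.2; rewrite ?expsum_winv /wcomm !expsum_cat !expsum_winv; lia.
Qed.

Lemma expsum_wpow i n m : expsum (wpow i n) m = if i == m then n else 0%R.
Proof.
rewrite /expsum /wpow; case: n => k; rewrite big_nseq_cond /gen_exp /=.
all: case: (i == m) => //=; rewrite GRing.iter_addr GRing.addr0 ?natz //.
by rewrite GRing.mulNrn natz NegzE; lia.
Qed.

Lemma expsum_rep (v : 'I_d -> int) m : expsum (rep v) m = v m.
Proof.
rewrite /rep /expsum big_flatten big_map big_enum /= (bigD1 m) //= -/(expsum _ _).
rewrite expsum_wpow eqxx big1 ?GRing.addr0 // => i /negbTE ni.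
by rewrite -/(expsum _ _) expsum_wpow ni.
Qed.

Lemma comm_eq_cons_wpow i e n :
  comm_eq ((i, e) :: wpow i n) (wpow i (n + gen_exp (i, e))%R).
Proof.
rewrite /gen_exp; case: e; case: n => [[|k]|k] /=; rewrite ?subn1 ?addn0 ?addn1 /=.
- exact: comm_eq_eval.
- exact: (comm_eq_cancel (i, true)).
- exact: comm_eq_eval.
- exact: comm_eq_eval.
- exact: comm_eq_eval.
case: k => [|k].
  by rewrite (_ : (Negz 0 + 1)%R = 0%N); [exact: (comm_eq_cancel (i, false) [::]) | lia].
rewrite (_ : (Negz k.+1 + 1)%R = Negz k); first exact: (comm_eq_cancel (i, false)).
by rewrite !NegzE; lia.
Qed.

Lemma comm_eq_cons_flatten_wpow (l : seq 'I_d) (v : 'I_d -> int) x :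
    uniq l -> x.1 \in l ->
  comm_eq (x :: flatten [seq wpow i (v i) | i <- l])
          (flatten [seq wpow i (v i + expsum [:: x] i)%R | i <- l]).
Proof.
elim: l => [|i l IH] //= /andP[il ul]; rewrite in_cons expsum_cons expsum_nil GRing.addr0.
have [xi|ne] := eqVneq x.1 i => /= [_|xl].
  have -> : [seq wpow j (v j + expsum [:: x] j)%R | j <- l] = [seq wpow j (v j) | j <- l].
    apply/eq_in_map => j jl; rewrite expsum_cons expsum_nil xi.
    by case: eqP => [ij|]; [rewrite ij jl in il | rewrite !GRing.addr0].
  rewrite -cat1s catA; apply: comm_eq_catr.
  by case: x {IH} xi => j e /= ->; apply: comm_eq_cons_wpow.
rewrite GRing.addr0.
set F := flatten _; apply: (comm_eq_trans (t := wpow i (v i) ++ x :: F)).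
  by have := comm_eq_catr F (comm_eq_catC [:: x] (wpow i (v i))); rewrite -!catA.
exact/comm_eq_catl/IH.
Qed.

Lemma comm_eq_rep_expsum s : comm_eq s (rep (expsum s)).
Proof.
elim: s => [|x s IH].
  apply: comm_eq_eval => u; rewrite /rep (_ : flatten _ = [::]) //.
  by elim: (enum 'I_d) => //= i l ->; rewrite expsum_nil.
apply: (comm_eq_trans (comm_eq_catl [:: x] IH)); rewrite cat1s /rep.
set g := fun i => wpow i (expsum s i + expsum [:: x] i)%R.
rewrite [X in comm_eq _ (flatten X)](eq_map (g := g)).
  by apply: comm_eq_cons_flatten_wpow; rewrite ?enum_uniq ?mem_enum.
move=> i; rewrite /g /= expsum_cons [expsum [:: x] i]expsum_cons expsum_nil.
by rewrite GRing.addr0 GRing.addrC.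
Qed.

Lemma sum_expsum_word_section s m :
  (\sum_p expsum (word_section s p) (ordS m) = expsum s (ordS m) + expsum s m)%R.
Proof.
elim: s => [|x s IH] /=; first by rewrite big1 ?expsum_nil // => p; rewrite expsum_nil.
have -> : (\sum_p expsum (word_section (x :: s) p) (ordS m) =
    \sum_p (if active x.1 p then expsum [:: gen_section x p] (ordS m) else 0)
    + \sum_p expsum (word_section s (transp x.1 p)) (ordS m))%R.
  rewrite -big_split; apply: eq_bigr => p _ /=.
  by case: (active x.1 p); rewrite ?GRing.add0r // -cat1s expsum_cat.
rewrite (big_transp _ x.1 (fun p => expsum (word_section s p) (ordS m))) IH.
rewrite (big_active _ (i := x.1)) => [|p /negbTE -> //].
rewrite /= /active !eqxx orbT !expsum_cons !expsum_nil /gen_section transp_self transp_ordS.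
case: x {IH} => i [] /=; rewrite (inj_eq (@ordS_inj d)) /gen_exp /=;
  by case: (i == m); case: (i == ordS m); lia.
Qed.

(** * Relators have zero exponent sums *)

Definition reduced s := sorted (fun x y => y != gen_inv x) s.

Lemma not_reduced_cancel s : ~~ reduced s -> exists r x t, s = r ++ [:: x, gen_inv x & t].
Proof.
elim: s => [|x [|y s] IH] //; rewrite /reduced /= negb_and negbK => /orP[/eqP ->|].
  by exists [::], x, s.
by case/IH=> r [z [t ->]]; exists (x :: r), z, t.
Qed.

Lemma relator_cancel r x t : relator (r ++ [:: x, gen_inv x & t]) -> relator (r ++ t).
Proof. by move=> rel w; have := rel w; rewrite !eval_cat eval_cancel. Qed.

Definition const_sign (e : bool) s := all (fun y => y.2 == e) s.

Lemma const_sign_section e s p : const_sign e s -> const_sign e (word_section s p).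
Proof.
elim: s p => [|x s IH] p //= /andP[xe se].
by case: (active x.1 p) => /=; rewrite ?xe IH.
Qed.

(* An inverse letter followed by a positive one has cancelling sections. *)
Lemma sorted_signs_of_reduced_section r p :
  all_active r p -> reduced (word_section r p) -> sorted implb (map snd r).
Proof.
elim: r p => [|x [|y r] IH] p //= /andP[xp] /[dup] yr /andP[yp _].
rewrite xp yp /= => /andP[yx red]; apply/andP; split; last first.
  by apply: (IH (transp x.1 p)) => //=; rewrite yp.
by move: yx; rewrite /gen_section /gen_inv; case: x.2; case: y.2; rewrite ?eqxx.
Qed.

Lemma all_neg_of_sorted_signs x r : x.2 -> sorted implb (map snd (x :: r)) -> all snd (x :: r).
Proof. by elim: r x => [|y r IH] x /= -> //= /andP[/= yneg /(IH y yneg)]. Qed.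

Section ThreeLetters.

Hypothesis d_gt2 : 2 < d.

Lemma ordSS_eqF i : (ordS (ordS i) == i) = false.
Proof.
apply/negbTE/eqP => /(congr1 val) /=; have := ltn_ord i.
rewrite leq_eqVlt => /orP[/eqP iS|ltd]; first by rewrite iS modnn modn_small; lia.
rewrite (modn_small ltd); move: ltd; rewrite leq_eqVlt => /orP[/eqP iS|ltd].
  by rewrite iS modnn; lia.
by rewrite modn_small //; lia.
Qed.

Lemma eq_ordSSF i : (i == ordS (ordS i)) = false.
Proof. by rewrite eq_sym ordSS_eqF. Qed.

Let ordS_neqE := (ordS_eqF, eq_ordSF, ordSS_eqF, eq_ordSSF, orbF, orFb).

Lemma active_pair_uniq i j p q :
  p != q -> active i p -> active i q -> active j p -> active j q -> j = i.
Proof.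
rewrite /active => pq /orP[]/eqP ip /orP[]/eqP iq /orP[]/eqP E1 /orP[]/eqP E2; subst p q.
all: try by rewrite eqxx in pq.
all: try by [subst j | apply: ordS_inj | move/eqP: E1; rewrite ?ordS_neqE
            | move/eqP: E2; rewrite ?ordS_neqE].
all: by [move/eqP: E1; rewrite -E2 ?ordS_neqE | move/eqP: E2; rewrite -E1 ?ordS_neqE].
Qed.

Lemma all_active_same_index s i p q : p != q -> active i p -> active i q ->
  all_active s p -> all_active s q -> all (fun y => y.1 == i) s.
Proof.
elim: s p q => [|x s IH] p q //= pq ip iq /andP[xp sp] /andP[xq sq].
have xi := active_pair_uniq pq ip iq xp xq; rewrite xi in sp sq *; rewrite eqxx /=.
apply: (IH (transp i p) (transp i q)); rewrite ?active_transp //.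
by rewrite (inj_eq (can_inj (transpK i))).
Qed.

(* Section lengths add up to 2|s|, so exactly two sections are full. *)
Lemma same_index_of_sections s : 0 < size s ->
    (forall p, size (word_section s p) \in [:: 0; size s]) ->
  exists i, all (fun y => y.1 == i) s.
Proof.
move=> s_gt0 sec01.
have : #|[set p | all_active s p]| * size s = 2 * size s.
  rewrite -sum_nat_const -sum_size_word_section big_mkcond /=; apply: eq_bigr => p _.
  rewrite inE -size_word_section_eq; case: eqP => [-> //|].
  by have := sec01 p; rewrite !inE => /orP[] /eqP.
move=> /eqP; rewrite (eqn_pmul2r s_gt0) => /cards2P[p [q [pq Apq]]].
have [ps qs] : all_active s p /\ all_active s q.
  by rewrite -[all_active s p]in_set -[all_active s q]in_set Apq !inE !eqxx orbT.
case: s s_gt0 {sec01 Apq} ps qs => [|x s] // _ /[dup] ps /andP[xp _] /[dup] qs /andP[xq _].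
by exists x.1; apply: (all_active_same_index pq xp xq).
Qed.

(* By induction all nonempty sections are full, so the letters share an index
   i; but then the section at i starts with letters of indices i and i+1. *)
Lemma const_sign_relator e s : const_sign e s -> relator s -> s = [::].
Proof.
have [n] := ubnP (size s); elim: n s => // n IH s /ltnSE sn es rel.
case: (posnP (size s)) => [/size0nil //|s_gt0]; exfalso.
have same_index t : size t = size s -> const_sign e t -> relator t ->
    exists i, all (fun y => y.1 == i) t.
  move=> ts et relt; apply: same_index_of_sections => [|p]; first by rewrite ts.
  rewrite !inE; have := size_word_section t p; rewrite leq_eqVlt.
  case/orP=> [-> | short]; first by rewrite orbT.
  suff -> : word_section t p = [::] by [].
  apply: IH; last exact: relator_section.
    by rewrite (leq_trans short) // ts.
  exact: const_sign_section.
have [i si] := same_index s (erefl _) es rel.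
case: s sn es rel s_gt0 si same_index => [|x [|y s]] // sn es rel _ + same_index.
  move=> /andP[/eqP xi _]; have := relator_word_perm x.1 rel.
  by rewrite /= transp_self => /eqP; rewrite ordS_eqF.
case/and3P=> xi yi si.
have full : size (word_section [:: x, y & s] x.1) = size [:: x, y & s].
  apply/eqP; rewrite size_word_section_eq; apply: (all_active_index (i := i)).
    exact/and3P.
  by rewrite /active (eqP xi) eqxx.
have [j] := same_index _ full (const_sign_section x.1 es) (relator_section x.1 rel).
move: es; case: x y xi yi {full sn rel same_index} => [_ ex] [_ ey] /= /eqP-> /eqP->.
rewrite /active eqxx transp_self eqxx orbT /= /gen_section /= transp_ordS.
case/and3P => /eqP-> /eqP-> _ /and3P[/eqP xj /eqP yj _].
by move: xj yj; rewrite transp_self; case: e {IH} => <- /eqP; rewrite ordS_neqE.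
Qed.

(* Follow a word r from p and its section word_section r p from q at the same
   time.  While both stay active, q - p is constant in {0, 1} along letters of
   one sign, and it flips where a positive letter is followed by an inverse one. *)
Definition offset p q (b : bool) := q = if b then ordS p else p.

Lemma offset_step_pos i p q b : offset p q b -> active i p ->
  active (transp i p) (transp p q) -> offset (transp i p) (transp p q) b.
Proof.
rewrite /offset /active => -> /orP[] /eqP -> {p}; case: b.
all: by rewrite ?transp_self ?transp_ordS ?ordS_neqE.
Qed.

Lemma offset_step_neg i p q b : offset p q b -> active i p ->
  active (transp i p) q -> offset (transp i p) (transp (transp i p) q) b.
Proof.
rewrite /offset /active => -> /orP[] /eqP -> {p}; case: b.
all: by rewrite ?transp_self ?transp_ordS ?ordS_neqE.
Qed.

Lemma offset_step_posneg i j p q b : offset p q b -> active i p -> j != i ->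
    active j (transp i p) -> active (transp j (transp i p)) (transp p q) ->
  offset (transp j (transp i p)) (transp (transp j (transp i p)) (transp p q)) (~~ b).
Proof.
rewrite /offset /active => -> /orP[] /eqP -> {p}.
- rewrite transp_self => ji /orP[] /eqP E; last by move: ji; rewrite (ordS_inj E) eqxx.
  subst j; rewrite transp_self; case: b; rewrite ?transp_self ?transp_ordS //=.
    by rewrite ?ordS_neqE => /eqP E; rewrite /transp ?ordS_neqE -E eqxx.
  by rewrite ?ordS_neqE.
- rewrite transp_ordS // => ji /orP[] /eqP E; first by move: ji; rewrite E eqxx.
  subst i; rewrite transp_ordS //; case: b; rewrite ?transp_self ?transp_ordS //=.
    by rewrite ?ordS_neqE.
  by rewrite ?ordS_neqE => /eqP E; rewrite E transp_self.
Qed.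

Lemma offset_neg_run r p q b : all_active r p -> all_active (word_section r p) q ->
  all snd r -> offset p q b -> offset (word_perm r p) (word_perm (word_section r p) q) b.
Proof.
elim: r p q => [|x r IH] p q //= /andP[xp rp].
rewrite xp /= => /andP[xq rq] /andP[xneg rneg] pq.
rewrite /gen_section xneg /= in xq rq *.
exact: IH (offset_step_neg pq xp xq).
Qed.

Lemma offset_flip_mixed x r p q b : ~~ x.2 -> has snd r -> reduced (x :: r) ->
    sorted implb (map snd (x :: r)) -> all_active (x :: r) p ->
    all_active (word_section (x :: r) p) q -> offset p q b ->
  offset (word_perm (x :: r) p) (word_perm (word_section (x :: r) p) q) (~~ b).
Proof.
elim: r x p q => [|y r IH] x p q //= xpos yr /andP[yx red] /andP[xy sgn].
case/andP=> xp /[dup] rp /andP[yp _].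
rewrite xp /gen_section (negbTE xpos) /= yp => /andP[xq /andP[yq rq]] pq.
case: (boolP y.2) => ypos /= in yx yr xy sgn yq rq *.
- have yi : y.1 != x.1.
    apply: contra yx => /eqP yi; apply/eqP.
    case: y ypos yi {IH yp yq rp rq red yr sgn} => j [] //= _ ->.
    by rewrite /gen_inv (negbTE xpos).
  have /andP[_ rneg] : all snd (y :: r) by apply: all_neg_of_sorted_signs; rewrite /= ?ypos.
  exact: offset_neg_run (proj2 (andP rp)) rq rneg (offset_step_posneg pq xp yi yp yq).
have := IH y (transp x.1 p) (transp p q) ypos yr red.
rewrite /= yp /gen_section (negbTE ypos) /= (proj2 (andP rp)) yq; apply => //.
exact: offset_step_pos pq xp yq.
Qed.

Lemma const_sign_of_full_sections r p q : reduced r -> all_active r p ->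
    all_active (word_section r p) q -> reduced (word_section r p) ->
    word_perm r p = p -> word_perm (word_section r p) q = q ->
  exists e, const_sign e r.
Proof.
move=> red ap af redf rp fq; have sgn := sorted_signs_of_reduced_section ap redf.
case: r => [|x r] in red ap af redf rp fq sgn *; first by exists true.
have [xneg|xpos] := boolP x.2.
  exists true; rewrite /const_sign.
  by apply: sub_all (all_neg_of_sorted_signs xneg sgn) => y; rewrite eqb_id.
have [rneg|rpos] := boolP (has snd r); last first.
  exists false; rewrite /const_sign /= eqbF_neg xpos /=.
  by move: rpos; rewrite -all_predC; apply: sub_all => y; rewrite eqbF_neg.
exfalso; set b := q == ordS p.
have pq : offset p q b.
  move: af; rewrite /= (proj1 (andP ap)) /gen_section (negbTE xpos) /= /offset /b.
  by case/andP=> /orP[] /eqP ->; rewrite ?eqxx ?eq_ordSF.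
have := offset_flip_mixed xpos rneg red sgn ap af pq.
by rewrite rp fq /offset pq; case: b {pq} => /eqP; rewrite ?ordS_neqE.
Qed.

Section OddDegree.

Hypothesis d_odd : odd d.

Lemma alternating_eq0 (v : 'I_d -> int) :
  (forall j, v (ordS j) + v j = 0)%R -> v =1 (fun=> 0%R).
Proof.
move=> alt j; have vk k : v (iter k (@ordS d) j) = if odd k then (- v j)%R else v j.
  elim: k => [|k IH] //=; have := alt (iter k (@ordS d) j).
  by rewrite IH; case: (odd k) => /=; lia.
have ordS_val k : val (iter k (@ordS d) j) = (j + k) %% d.
  elim: k => [|k IH] /=; first by rewrite addn0 modn_small.
  by rewrite IH -addn1 modnDml addn1 addnS.
have := vk d; rewrite d_odd (_ : iter d _ j = j); first by lia.
by apply: val_inj; rewrite ordS_val modnDr modn_small.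
Qed.

Lemma expsum_eq0_of_sections r :
  (forall p m, expsum (word_section r p) m = 0%R) -> forall m, expsum r m = 0%R.
Proof.
move=> sec0; apply: alternating_eq0 => j; rewrite -sum_expsum_word_section.
by rewrite big1 // => p _; apply: sec0.
Qed.

Lemma relator_expsum_eq0 r : relator r -> forall m, expsum r m = 0%R.
Proof.
have [n] := ubnP (size r); elim: n r => // n IH r /ltnSE rn rel.
have short t : size t < size r -> relator t -> forall m, expsum t m = 0%R.
  by move=> tr; apply: IH; rewrite (leq_trans tr).
have unreduced t : size t <= size r -> relator t -> ~~ reduced t ->
    forall m, expsum t m = 0%R.
  move=> tr relt /not_reduced_cancel[u [x [v tE]]] m; subst t.
  rewrite expsum_cancel; apply: short (relator_cancel relt) m.
  by move: tr; rewrite !size_cat /=; lia.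
have [redr|] := boolP (reduced r); last exact: unreduced.
apply: expsum_eq0_of_sections => p; set f := word_section r p.
have relf : relator f := relator_section p rel.
have := size_word_section r p; rewrite leq_eqVlt => /orP[ffull|fr]; last exact: short fr relf.
have ap : all_active r p by rewrite -size_word_section_eq.
move/eqP: ffull => ffull.
have [redf|] := boolP (reduced f); last exact: unreduced (eq_leq ffull) relf.
apply: expsum_eq0_of_sections => q.
have := size_word_section f q; rewrite leq_eqVlt => /orP[|gf].
  rewrite size_word_section_eq => af.
  have [e re] := const_sign_of_full_sections redr ap af redf
    (relator_word_perm p rel) (relator_word_perm q relf).
  by move=> m; rewrite /f (const_sign_relator re rel) expsum_nil.
by apply: short (relator_section q relf); rewrite -ffull.
Qed.

Lemma rep_comm_eq_inj (v w : 'I_d -> int) : comm_eq (rep w) (rep v) -> v =1 w.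
Proof.
case=> cs csE m.
have rel : relator ((winv (rep v) ++ rep w) ++ winv (flatten (map comm_factor cs))).
  by move=> u; rewrite eval_cat -csE evalK.
have := relator_expsum_eq0 rel m.
by rewrite !expsum_cat !expsum_winv expsum_comm_factors !expsum_rep; lia.
Qed.

End OddDegree.
End ThreeLetters.
End Words.

Theorem theorem4p3 (d : nat) (hd : 3 <= d) (hodd : odd d) :
  (forall s : seq (gen d), exists v : 'I_d -> int,
      in_comm (eval (winv (rep v) ++ s)))
  /\
  (forall v w : 'I_d -> int,
      in_comm (eval (winv (rep v) ++ rep w)) -> v =1 w).
Proof.
split=> [s | v w]; first by exists (expsum s); apply: comm_eq_rep_expsum (ltnW hd) s.
exact: rep_comm_eq_inj (ltnW hd) hd hodd v w.
Qed.
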